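(* Let $\gamma\geq0$, $G=(V,E,\omega)\in\mathcal C_\gamma$, and let $w:[0,\infty)\to\mathcal V$ be the solution of $\frac{dw}{dt}=-Lw$, $w(0)=w_0\in\mathcal V$. Let $c_1,c_2\in\mathbb R$ be such that $c_1\leq(w_0)_i\leq c_2$ for all $i\in V$. Then $c_1\leq w_i(t)\leq c_2$ for all $t\geq0$ and $i\in V$. In particular, $\|w(t)\|_{\mathcal V,\infty}\leq\|w_0\|_{\mathcal V,\infty}$ for all $t\geq0$.
   Context: $\mathcal{G}$ is the set of finite, simple, connected, undirected, edge-weighted graphs $G=(V,E,\omega)$ with $V=\{1,\dots,n\}$, $n\geq2$, weights $\omega_{ij}=\omega_{ji}>0$ on edges, $0$ otherwise. $d_i=\sum_j\omega_{ij}$. $\mathcal V$: functions $V\to\mathbb R$; $\|u\|_{\mathcal V,\infty}=\max_i|u_i|$. Fixed $r\in[0,1]$: $(\Delta u)_i=d_i^{-r}\sum_j\omega_{ij}(u_i-u_j)$, $\mathcal M(u)=\sum_id_i^ru_i$, $\mathrm{vol}(V)=\sum_id_i^r$, $\mathcal A(u)=\frac{\mathcal M(u)}{\mathrm{vol}(V)}\chi_V$. For $u\in\mathcal V$ let $\varphi$ be the unique solution of $\Delta\varphi=u-\mathcal A(u)$, $\mathcal M(\varphi)=0$, and $Lu:=\Delta u+\gamma\varphi$. Equilibrium measure $\nu^S$ ($S\subsetneq V$): unique $\nu$ with $(\Delta\nu)_i=1$ on $S$, $\nu=0$ off $S$. $f^j:=\nu^{V\setminus\{j\}}-\mathcal A(\nu^{V\setminus\{j\}})$.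 $\mathcal C^0=\{G\in\mathcal G:\forall j\ \forall i\neq j:\ \omega_{ij}>0\text{ or }f^j_i\geq0\}$; for $\gamma>0$, $\mathcal C_\gamma=\{G\in\mathcal C^0:\forall j\ \forall i\neq j:\ \omega_{ij}=0\text{ or }d_i^{-r}\omega_{ij}+\gamma\frac{d_j^r}{\mathrm{vol}(V)}f^j_i>0\}$; $\mathcal C_0:=\mathcal G$. *)

From HB Require Import structures.
From mathcomp Require Import all_boot all_order all_algebra.
From mathcomp Require Import all_classical all_reals all_analysis.
Set Implicit Arguments. Unset Strict Implicit. Unset Printing Implicit Defensive.
Import Order.TTheory GRing.Theory Num.Theory numFieldNormedType.Exports.
Local Open Scope ring_scope.
Local Open Scope classical_set_scope.

Section GraphDefs.
Variables (R : realType) (n : nat).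
Implicit Types (om : 'I_n -> 'I_n -> R) (u : 'I_n -> R).

Definition edge_rel om : rel 'I_n := fun i j => 0 < om i j.

Definition is_graph om : Prop :=
  (2 <= n)%N /\
  (forall i j, om i j = om j i) /\
  (forall i j, 0 <= om i j) /\
  (forall i, om i i = 0) /\
  (forall i j, connect (edge_rel om) i j).

Definition deg om (i : 'I_n) : R := \sum_(j < n) om i j.

Definition Delta (r : R) om u : 'I_n -> R :=
  fun i => powR (deg om i) (- r) * \sum_(j < n) om i j * (u i - u j).

Definition Mass (r : R) om u : R := \sum_(i < n) powR (deg om i) r * u i.

Definition vol (r : R) om : R := \sum_(i < n) powR (deg om i) r.

Definition Avg (r : R) om u : 'I_n -> R := fun _ => Mass r om u / vol r om.

Definition phi_of (r : R) om u : 'I_n -> R :=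
  xget (fun _ => 0)
    [set p | Delta r om p = (fun i => u i - Avg r om u i) /\ Mass r om p = 0].

Definition Lop (r gamma : R) om u : 'I_n -> R :=
  fun i => Delta r om u i + gamma * phi_of r om u i.

Definition eq_measure (r : R) om (S : {set 'I_n}) : 'I_n -> R :=
  xget (fun _ => 0)
    [set nu | (forall i, i \in S -> Delta r om nu i = 1) /\
              (forall i, i \notin S -> nu i = 0)].

Definition fj (r : R) om (j : 'I_n) : 'I_n -> R :=
  let nu := eq_measure r om (~: [set j]) in fun i => nu i - Avg r om nu i.

Definition in_C0 (r : R) om : Prop :=
  forall j i : 'I_n, i != j -> 0 < om i j \/ 0 <= fj r om j i.

(* C_gamma for gamma > 0, and C_0 := all graphs *)
Definition in_Cgamma (r gamma : R) om : Prop :=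
  if gamma == 0 then True else
  in_C0 r om /\
  forall j i : 'I_n, i != j ->
    om i j = 0 \/
    0 < powR (deg om i) (- r) * om i j
        + gamma * (powR (deg om j) r / vol r om) * fj r om j i.

Definition sup_norm u : R := \big[Num.max/0]_(i < n) `|u i|.

End GraphDefs.

From Pilot Require Import Defs.
From HB Require Import structures.
From mathcomp Require Import all_boot all_order all_algebra.
From mathcomp Require Import all_classical all_reals all_analysis.
From mathcomp Require Import ring lra.
Import Order.TTheory GRing.Theory Num.Theory numFieldNormedType.Exports.
Local Open Scope ring_scope.
Local Open Scope classical_set_scope.

(* Write the Poisson solution of Delta phi = u - A(u), M(phi) = 0 as
   phi = - sum_k u_k (d_k^r / vol V) f^k; since phi vanishes on constants this gives
   L u_i = sum_k (u_i - u_k) B_ik with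
   B_ik = d_i^-r w_ik + gamma (d_k^r / vol V) f^k_i,
   and membership in C_gamma says precisely that B_ik >= 0 for k <> i.  Hence
   L u >= 0 at a vertex where u is maximal and L u <= 0 where it is minimal, so
   w' = - L w never pushes an extremal coordinate outwards.  The invariance of
   [c1, c2]^V follows by comparing w with the barrier c2 + e (1 + t) at the first
   time it is reached. *)

Section RealAnalysis.
Variable R : realType.

Lemma inf_mem_at_right (A : set R) : has_inf A ->
  (~ A (inf A) -> \forall x \near (inf A)^'+, ~ A x) -> A (inf A).
Proof.
move=> hA gap; apply: contrapT => nA.
move: (gap nA); rewrite near_withinE => /nbhs_ballP[d d0 nearA].
have [a Aa ad] := inf_adherent d0 hA.
have lt_inf_a : inf A < a := inf_lb_strict hA.2 nA Aa.
apply: (nearA a _ lt_inf_a Aa); rewrite /ball /= ltr_norml; apply/andP; split; lra.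
Qed.

Lemma derive1_ge_at_left (f : R -> R) (t e : R) : derivable f t 1 ->
  (\forall h \near 0^'-, f (h + t) <= f t + e * h) -> e <= f^`() t.
Proof.
move=> df slope; rewrite derive1E.
pose q h := h^-1 *: ((f \o shift t) (h *: 1) - f t).
have q_left : q h @[h --> 0^'-] --> 'D_1 f t.
  by apply: cvg_trans (cvg_app q (within_subset _ _)) df => h /lt_eqF ->.
rewrite -(cvg_lim _ q_left) //; apply: limr_ge; first by apply/cvg_ex; exists ('D_1 f t).
near=> h.
have h0 : h < 0 by near: h; exact: nbhs_left_lt.
have : f (h + t) <= f t + e * h by near: h; exact: slope.
rewrite /q /shift /= [_ *: 1]mulr1 [_ *: _]mulrC -ler_ndivlMr ?invr_lt0 // invrK.
by rewrite lerBlDl.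
Unshelve. all: by end_near. Qed.

End RealAnalysis.

Section ODEMaximumPrinciple.
Variables (R : realType) (n : nat) (w : R -> 'I_n -> R) (c : R).
Hypothesis w0_le : forall i, w 0 i <= c.
Hypothesis w_cont0 : forall i, (fun s => w s i) x @[x --> 0^'+] --> w 0 i.
Hypothesis w_derivable : forall t, 0 < t -> forall i, derivable (fun s => w s i) t 1.
Hypothesis w_descent_at_max : forall {t}, 0 < t -> forall i,
  (forall j, w t j <= w t i) -> (fun s => w s i)^`() t <= 0.

Lemma ode_cvg_at_right i {t} : 0 <= t -> (fun s => w s i) x @[x --> t^'+] --> w t i.
Proof.
move=> t0; have [->|tne0] := eqVneq t 0; first exact: w_cont0.
apply/cvg_at_right_filter/differentiable_continuous/derivable1_diffP.
by apply: w_derivable; rewrite lt_neqAle eq_sym tne0.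
Qed.

Lemma ode_barrier e t i : 0 < e -> 0 <= t -> w t i < c + e * (1 + t).
Proof.
pose b s := c + e * (1 + s).
move=> e0 t0; rewrite ltNge; apply/negP => bad.
pose A := [set s | 0 <= s /\ exists k, b s <= w s k].
have hA : has_inf A by split; [exists t; split; last exists i | exists 0 => s []].
set ts := inf A.
have ts_ge0 : 0 <= ts by apply: lb_le_inf; [exists t; split; last exists i | move=> s []].
have below s k : 0 <= s -> s < ts -> w s k < b s.
  move=> s0 sts; rewrite ltNge; apply/negP => bad_s.
  have := ge_inf hA.2 (conj s0 (ex_intro _ k bad_s) : A s); rewrite -/ts; lra.
have [_ [i0 ts_bad]] : A ts.
  apply: inf_mem_at_right => // ts_good.
  have ts_below k : w ts k < b ts.
    by rewrite ltNge; apply/negP => bad_k; apply: ts_good; split; last exists k.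
  have near_below : \forall x \near ts^'+, forall k, w x k < b x.
    apply: filter_forall => k; near=> x.
    have : b ts <= b x by rewrite lerD2l ler_pM2l // lerD2l; near: x; exact: nbhs_right_ge.
    have : w x k < b ts by near: x; exact: (cvgr_lt _ (ode_cvg_at_right k ts_ge0) _ (ts_below k)).
    lra.
  by apply: filterS near_below => x x_below [_ [k]]; have := x_below k; lra.
have ts_gt0 : 0 < ts.
  rewrite lt_neqAle ts_ge0 andbT; apply/eqP => ts0.
  by move: ts_bad; rewrite -ts0 /b; have := w0_le i0; lra.
have [j j_max] : exists j, forall k, w ts k <= w ts j.
  by have [j _ j_max] := @arg_maxP _ _ _ i0 xpredT (w ts) isT; exists j => k; exact: j_max.
have : e <= (fun s => w s j)^`() ts.
  apply: derive1_ge_at_left; first exact: w_derivable.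
  near=> h.
  have : - ts < h by near: h; apply: nbhs_left_gt; lra.
  have : h < 0 by near: h; exact: nbhs_left_lt.
  move=> h0 h_ts; have := below (h + ts) j ltac:(lra) ltac:(lra).
  by have := j_max i0; have := ts_bad; rewrite /b; lra.
have := w_descent_at_max ts_gt0 _ j_max; lra.
Unshelve. all: by end_near. Qed.

Lemma ode_max_principle t i : 0 <= t -> w t i <= c.
Proof.
move=> t0; apply/ler_addgt0Pr => eps eps0.
have t1 : 0 < 1 + t by lra.
have := ode_barrier (eps / (1 + t)) t i (divr_gt0 eps0 t1) t0.
by rewrite mulfVK ?gt_eqF // => /ltW.
Qed.

End ODEMaximumPrinciple.

Lemma ode_invariant_interval (R : realType) (n : nat) (w : R -> 'I_n -> R) (a b : R) :
  (forall i, a <= w 0 i <= b) ->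
  (forall i, (fun s => w s i) x @[x --> 0^'+] --> w 0 i) ->
  (forall t, 0 < t -> forall i, derivable (fun s => w s i) t 1) ->
  (forall t, 0 < t -> forall i,
    (forall j, w t j <= w t i) -> (fun s => w s i)^`() t <= 0) ->
  (forall t, 0 < t -> forall i,
    (forall j, w t i <= w t j) -> 0 <= (fun s => w s i)^`() t) ->
  forall t, 0 <= t -> forall i, a <= w t i <= b.
Proof.
move=> w0_ab w_cont0 w_der w_max w_min t t0 i; apply/andP; split; last first.
  by apply: (@ode_max_principle _ _ w b) => // k; case/andP: (w0_ab k).
rewrite -lerN2; apply: (@ode_max_principle _ _ (fun s k => - w s k)) => //.
- by move=> k; rewrite lerN2; case/andP: (w0_ab k).
- by move=> k; apply: cvgN.
- by move=> s s0 k; apply: derivableN; exact: w_der.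
- move=> s s0 k k_max; rewrite (derive1N (w_der s s0 k)) oppr_le0.
  by apply: w_min => // j; rewrite -lerN2.
Qed.

Lemma sum_mul_eq1 (R : pzSemiRingType) (I : finType) (u : I -> R) (x : I) :
  \sum_k u k * (k == x)%:R = u x.
Proof.
rewrite (bigD1 x) //= eqxx mulr1 big1 ?addr0 // => k /negbTE ->.
by rewrite mulr0.
Qed.

Section GraphLaplacian.
Variables (R : realType) (n : nat) (om : 'I_n -> 'I_n -> R) (r : R).
Hypothesis om_graph : is_graph om.

Local Notation dr i := (deg om i `^ r).

Lemma deg_gt0 i : 0 < deg om i.
Proof.
have [n2 [_ [om_ge0 [_ om_conn]]]] := om_graph.
have [k ki] : exists k : 'I_n, k != i.
  have [->|i_ne0] := eqVneq i (Ordinal (ltnW n2)); first by exists (Ordinal n2).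
  by exists (Ordinal (ltnW n2)); rewrite eq_sym.
have /connectP [[|y p] /= iy_path k_last] := om_conn i k.
  by move: ki; rewrite k_last eqxx.
case/andP: iy_path => iy _.
rewrite /deg (bigD1 y) //=; apply: (lt_le_trans iy).
by rewrite lerDl; apply: sumr_ge0.
Qed.

Lemma dr_gt0 i : 0 < dr i.
Proof. exact: powR_gt0 (deg_gt0 i). Qed.

Lemma vol_gt0 : 0 < vol r om.
Proof.
have [n2 _] := om_graph.
pose i0 := Ordinal (ltnW n2).
rewrite /vol (bigD1 i0) //=; apply: (lt_le_trans (dr_gt0 i0)).
by rewrite lerDl; apply: sumr_ge0 => i _; exact/ltW/dr_gt0.
Qed.

Lemma DeltaE u i : Delta r om u i = (dr i)^-1 * \sum_j om i j * (u i - u j).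
Proof. by rewrite /Delta powRN. Qed.

Lemma sum_dr_Delta u : \sum_i dr i * Delta r om u i = 0.
Proof.
have [_ [om_sym _]] := om_graph.
under eq_bigr => i _ do rewrite DeltaE mulVKf ?gt_eqF ?dr_gt0 //.
set S := (X in X = 0).
suff : S = - S by lra.
rewrite {2}/S exchange_big -sumrN; apply: eq_bigr => i _.
by rewrite -sumrN; apply: eq_bigr => j _; rewrite om_sym; ring.
Qed.

Lemma DeltaB u v i :
  Delta r om (fun x => u x - v x) i = Delta r om u i - Delta r om v i.
Proof. by rewrite /Delta -mulrBr -sumrB; congr (_ * _); apply: eq_bigr => j _; ring. Qed.

Lemma DeltaN u i : Delta r om (fun x => - u x) i = - Delta r om u i.
Proof. by rewrite /Delta -mulrN -sumrN; congr (_ * _); apply: eq_bigr => j _; ring. Qed.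

Lemma Delta_cst a i : Delta r om (fun _ => a) i = 0.
Proof. by rewrite /Delta big1 ?mulr0 // => j _; rewrite subrr mulr0. Qed.

Lemma Delta_sum (a : 'I_n -> R) (g : 'I_n -> 'I_n -> R) i :
  Delta r om (fun x => \sum_k a k * g k x) i = \sum_k a k * Delta r om (g k) i.
Proof.
rewrite /Delta.
transitivity (deg om i `^ (- r) * \sum_j \sum_k a k * (om i j * (g k i - g k j))).
  congr (_ * _); apply: eq_bigr => j _; rewrite -sumrB mulr_sumr.
  by apply: eq_bigr => k _; ring.
rewrite exchange_big mulr_sumr; apply: eq_bigr => k _.
by rewrite -mulr_sumr; ring.
Qed.

Lemma MassB u v : Mass r om (fun x => u x - v x) = Mass r om u - Mass r om v.
Proof. by rewrite /Mass -sumrB; apply: eq_bigr => j _; ring. Qed.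

Lemma Mass_sum (a : 'I_n -> R) (g : 'I_n -> 'I_n -> R) :
  Mass r om (fun x => \sum_k a k * g k x) = \sum_k a k * Mass r om (g k).
Proof.
rewrite /Mass; under eq_bigr => i _ do rewrite mulr_sumr.
rewrite exchange_big; apply: eq_bigr => k _; rewrite mulr_sumr.
by apply: eq_bigr => i _; ring.
Qed.

Lemma harmonic_max_edge nu x y : Delta r om nu x = 0 ->
  (forall k, nu k <= nu x) -> edge_rel om x y -> nu y = nu x.
Proof.
have [_ [_ [om_ge0 _]]] := om_graph.
move=> harm nu_max xy.
have term_ge0 k : true -> 0 <= om x k * (nu x - nu k).
  by move=> _; rewrite mulr_ge0 // subr_ge0.
move: harm; rewrite DeltaE => /eqP; rewrite mulf_eq0 invr_eq0 gt_eqF ?dr_gt0 //=.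
move=> /eqP /(psumr_eq0P term_ge0) /(_ y isT) /eqP.
rewrite mulf_eq0 subr_eq0.
by case/orP => [/eqP om0 | /eqP //]; move: xy; rewrite /edge_rel om0 ltxx.
Qed.

Lemma Dirichlet_le0 nu j : nu j = 0 ->
  (forall i, i != j -> Delta r om nu i = 0) -> forall k, nu k <= 0.
Proof.
have [_ [om_sym [_ [_ om_conn]]]] := om_graph.
move=> nuj harm.
have [i _ nu_max] := @arg_maxP _ _ _ j xpredT nu isT.
have [M_le0|M_gt0] := leP (nu i) 0; first by move=> k; exact: le_trans (nu_max k isT) M_le0.
have step x y : edge_rel om x y -> nu x = nu i -> nu y = nu i.
  move=> xy nux; rewrite -nux; apply: harmonic_max_edge xy.
    by apply: harm; apply/eqP => xj; move: M_gt0; rewrite -nux xj nuj ltxx.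
  by move=> k; rewrite nux; exact: nu_max.
have max_closed : fingraph.closed (edge_rel om) [pred k | nu k == nu i].
  move=> x y xy; rewrite !inE; apply/eqP/eqP; first exact: step.
  by apply: step; rewrite /edge_rel om_sym.
move: M_gt0; have := closed_connect max_closed (om_conn i j).
by rewrite !inE eqxx nuj => /esym/eqP <-; rewrite ltxx.
Qed.

Lemma Dirichlet_eq0 nu j : nu j = 0 ->
  (forall i, i != j -> Delta r om nu i = 0) -> forall k, nu k = 0.
Proof.
move=> nuj harm k; apply/eqP; rewrite eq_le (Dirichlet_le0 _ _ nuj harm) /=.
rewrite -oppr_le0; apply: (@Dirichlet_le0 (fun x => - nu x) j); first by rewrite nuj oppr0.
by move=> i ij; rewrite DeltaN harm // oppr0.
Qed.

Lemma Dirichlet_exists j (g : 'I_n -> R) : exists nu : 'I_n -> R,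
  nu j = 0 /\ forall i, i != j -> Delta r om nu i = g i.
Proof.
pose A : 'M[R]_n := \matrix_(k, i)
  (if i == j then (k == j)%:R else Delta r om (fun x => (k == x)%:R) i).
have mulA (v : 'rV[R]_n) i : (v *m A) 0 i =
    if i == j then v 0 j else Delta r om (fun k => v 0 k) i.
  rewrite !mxE; under eq_bigr => k _ do rewrite mxE.
  case: ifP => _; first exact: sum_mul_eq1.
  rewrite -Delta_sum; congr (Delta r om _ i); apply/funext => x.
  exact: sum_mul_eq1.
have A_unit : A \in unitmx.
  rewrite unitmxE unitfE; apply/negP => /det0P [v v_neq0 vA0].
  apply/negP: v_neq0; rewrite negbK; apply/eqP/rowP => k; rewrite mxE.
  have vj : v 0 j = 0 by have := mulA v j; rewrite eqxx vA0 mxE.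
  apply: (@Dirichlet_eq0 (fun k => v 0 k) j vj) => i ij.
  by have := mulA v i; rewrite (negbTE ij) vA0 mxE.
pose b : 'rV[R]_n := \row_i (if i == j then 0 else g i).
have := mulA (b *m invmx A); rewrite mulmxKV // => solA.
exists (fun k => (b *m invmx A) 0 k); split.
  by have := solA j; rewrite eqxx mxE eqxx.
by move=> i ij; have := solA i; rewrite (negbTE ij) mxE (negbTE ij).
Qed.

Lemma eq_measure_compl1 j :
  Defs.eq_measure r om (~: [set j]) j = 0 /\
  forall i, i != j -> Delta r om (Defs.eq_measure r om (~: [set j])) i = 1.
Proof.
have [nu [nuj Dnu]] := Dirichlet_exists j (fun _ => 1).
have [] : [set nu | (forall i, i \in ~: [set j] -> Delta r om nu i = 1) /\
                    (forall i, i \notin ~: [set j] -> nu i = 0)]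
            (Defs.eq_measure r om (~: [set j])).
  apply: xgetPex; exists nu; split => i; rewrite !inE ?negbK; first exact: Dnu.
  by move=> /eqP ->.
move=> Dmu mu0; split; first by apply: mu0; rewrite !inE eqxx.
by move=> i ij; apply: Dmu; rewrite !inE.
Qed.

Lemma Delta_fj j i :
  Delta r om (fj r om j) i = 1 - (i == j)%:R * vol r om / dr j.
Proof.
have [_ Dmu] := eq_measure_compl1 j.
rewrite /fj /Avg (DeltaB _ (fun _ => _)) Delta_cst subr0.
have [->|ij] := eqVneq i j; last by rewrite Dmu // !mul0r subr0.
have := sum_dr_Delta (Defs.eq_measure r om (~: [set j])).
rewrite (bigD1 j) //= (eq_bigr (fun k => dr k)) => [|k kj]; last by rewrite Dmu // mulr1.
have -> : \sum_(i | i != j) dr i = vol r om - dr j.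
  by rewrite [in RHS]/vol [in RHS](bigD1 j) //= addrC addrK.
have dj := dr_gt0 j; rewrite mul1r => green.
rewrite -[LHS](mulKf (lt0r_neq0 dj)) (_ : dr j * _ = dr j - vol r om); last by lra.
by rewrite mulrBr mulVf ?gt_eqF // mulrC.
Qed.

Lemma Mass_fj j : Mass r om (fj r om j) = 0.
Proof.
rewrite /fj /Avg (MassB _ (fun _ => _)) {2}/Mass -mulr_suml -/(vol r om).
by rewrite mulrC mulfVK ?gt_eqF ?vol_gt0 // subrr.
Qed.

Lemma Delta_sum_fj (a : 'I_n -> R) i :
  Delta r om (fun x => \sum_k a k * fj r om k x) i = \sum_k a k - a i * vol r om / dr i.
Proof.
rewrite Delta_sum; under eq_bigr => k _ do rewrite Delta_fj mulrBr mulr1.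
rewrite sumrB; congr (_ - _).
rewrite (bigD1 i) //= eqxx mul1r mulrA big1 ?addr0 // => k ki.
by rewrite eq_sym (negbTE ki) !mul0r mulr0.
Qed.

Lemma Mass_sum_fj (a : 'I_n -> R) : Mass r om (fun x => \sum_k a k * fj r om k x) = 0.
Proof. by rewrite Mass_sum big1 // => k _; rewrite Mass_fj mulr0. Qed.

Lemma Delta_Mass_eq0 q :
  (forall i, Delta r om q i = 0) -> Mass r om q = 0 -> forall k, q k = 0.
Proof.
move=> harm mass0 k.
have q_cst x : q x = q k.
  apply/eqP; rewrite -subr_eq0; apply/eqP.
  apply: (@Dirichlet_eq0 (fun y => q y - q k) k); first by rewrite subrr.
  by move=> i _; rewrite (DeltaB _ (fun _ => _)) Delta_cst harm subr0.
move: mass0; rewrite /Mass; under eq_bigr => i _ do rewrite q_cst.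
rewrite -mulr_suml -/(vol r om) => /eqP; rewrite mulf_eq0 (gt_eqF vol_gt0) /=.
by move/eqP.
Qed.

Lemma phi_ofE u :
  phi_of r om u = (fun x => \sum_k (- u k * dr k / vol r om) * fj r om k x).
Proof.
set phi := (fun x => _).
have Dphi : Delta r om phi = (fun i => u i - Avg r om u i).
  apply/funext => i; rewrite Delta_sum_fj /Avg /Mass.
  have -> : \sum_k (- u k * dr k / vol r om) = - (\sum_k dr k * u k / vol r om).
    by rewrite -sumrN; apply: eq_bigr => k _; ring.
  have := dr_gt0 i; have := vol_gt0; rewrite -mulr_suml => dv di.
  by field; rewrite ?gt_eqF.
apply: xget_unique; first by split; [exact: Dphi | exact: Mass_sum_fj].
move=> q [Dq Mq]; apply/funext => k; apply/eqP; rewrite -subr_eq0; apply/eqP.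
apply: (@Delta_Mass_eq0 (fun x => q x - phi x)) => [i|].
  by rewrite DeltaB Dq Dphi subrr.
by rewrite MassB Mq Mass_sum_fj subrr.
Qed.

Lemma sum_fj_eq0 i : \sum_k dr k / vol r om * fj r om k i = 0.
Proof.
apply: (@Delta_Mass_eq0 (fun x => \sum_k dr k / vol r om * fj r om k x)).
  move=> x; rewrite Delta_sum_fj -mulr_suml -/(vol r om).
  have := dr_gt0 x; have := vol_gt0 => dv dx.
  by field; rewrite ?gt_eqF.
exact: Mass_sum_fj.
Qed.

Definition Lcoef (gamma : R) i k :=
  deg om i `^ (- r) * om i k + gamma * (dr k / vol r om) * fj r om k i.

Lemma LopE gamma u i : Lop r gamma om u i = \sum_k (u i - u k) * Lcoef gamma i k.
Proof.
rewrite /Lop phi_ofE /Delta.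
have -> : \sum_k (- u k * dr k / vol r om) * fj r om k i =
          \sum_k (u i - u k) * (dr k / vol r om * fj r om k i).
  transitivity (\sum_k (u i - u k) * (dr k / vol r om * fj r om k i)
                - u i * \sum_k dr k / vol r om * fj r om k i).
    by rewrite mulr_sumr -sumrB; apply: eq_bigr => k _; ring.
  by rewrite sum_fj_eq0 mulr0 subr0.
rewrite !mulr_sumr -big_split /=; apply: eq_bigr => k _.
by rewrite /Lcoef; ring.
Qed.

Section CgammaGraph.
Variable gamma : R.
Hypotheses (gamma_ge0 : 0 <= gamma) (om_Cgamma : in_Cgamma r gamma om).

Lemma Lcoef_ge0 i k : k != i -> 0 <= Lcoef gamma i k.
Proof.
have [_ [_ [om_ge0 _]]] := om_graph.
have c_ge0 : 0 <= gamma * (dr k / vol r om).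
  by rewrite mulr_ge0 // divr_ge0 ?powR_ge0 // ltW // vol_gt0.
move=> ki; have [->|gamma_neq0] := eqVneq gamma 0.
  by rewrite /Lcoef !mul0r addr0 mulr_ge0 ?powR_ge0.
move: om_Cgamma; rewrite /in_Cgamma (negbTE gamma_neq0) => -[C0 Cg].
have ik : i != k by rewrite eq_sym.
case: (Cg k i ik) => [om0|]; last exact: ltW.
case: (C0 k i ik) => [|fj_ge0]; first by rewrite om0 ltxx.
by rewrite /Lcoef om0 mulr0 add0r mulr_ge0.
Qed.

Lemma Lop_ge0_at_max u i : (forall k, u k <= u i) -> 0 <= Lop r gamma om u i.
Proof.
move=> u_max; rewrite LopE; apply: sumr_ge0 => k _.
have [->|ki] := eqVneq k i; first by rewrite subrr mul0r.
by rewrite mulr_ge0 ?subr_ge0 ?Lcoef_ge0.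
Qed.

Lemma Lop_le0_at_min u i : (forall k, u i <= u k) -> Lop r gamma om u i <= 0.
Proof.
move=> u_min; rewrite LopE; apply: sumr_le0 => k _.
have [->|ki] := eqVneq k i; first by rewrite subrr mul0r.
by rewrite mulr_le0_ge0 ?subr_le0 ?Lcoef_ge0.
Qed.

End CgammaGraph.

End GraphLaplacian.

Section SupNorm.
Variables (R : realType) (n : nat).

Lemma ler_sup_norm (u : 'I_n -> R) i : `|u i| <= sup_norm u.
Proof. exact: (le_bigmax _ (fun j => `|u j|)). Qed.

Lemma sup_norm_ge0 (u : 'I_n -> R) : 0 <= sup_norm u.
Proof. exact: bigmax_ge_id. Qed.

Lemma sup_norm_le (u : 'I_n -> R) N : 0 <= N -> (forall i, `|u i| <= N) -> sup_norm u <= N.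
Proof. by move=> N0 uN; apply: bigmax_le => // i _; exact: uN. Qed.

End SupNorm.

Theorem corollary6p28 (R : realType) (n : nat) (om : 'I_n -> 'I_n -> R)
  (r gamma : R) (w0 : 'I_n -> R) (w : R -> 'I_n -> R) (c1 c2 : R) :
  is_graph om -> 0 <= r -> r <= 1 -> 0 <= gamma ->
  in_Cgamma r gamma om ->
  (* w solves dw/dt = - L w on [0, oo) with w(0) = w0 *)
  w 0 = w0 ->
  (forall i, (fun s => w s i) x @[x --> 0^'+] --> w 0 i) ->
  (forall t, 0 < t -> forall i,
     derivable (fun s => w s i) t 1 /\
     (fun s => w s i)^`() t = - Lop r gamma om (w t) i) ->
  (forall i, c1 <= w0 i <= c2) ->
  (forall t, 0 <= t -> forall i, c1 <= w t i <= c2) /\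
  (forall t, 0 <= t -> sup_norm (w t) <= sup_norm w0).
Proof.
move=> om_graph _ _ gamma_ge0 om_Cgamma <- w_cont0 w_ode w0_c1c2.
have w_bounds a b : (forall i, a <= w 0 i <= b) ->
    forall t, 0 <= t -> forall i, a <= w t i <= b.
  move=> w0_ab; apply: ode_invariant_interval => // t t0 i.
  - exact: (w_ode t t0 i).1.
  - by move=> i_max; rewrite (w_ode t t0 i).2 oppr_le0; apply: Lop_ge0_at_max.
  - by move=> i_min; rewrite (w_ode t t0 i).2 oppr_ge0; apply: Lop_le0_at_min.
split; first exact: w_bounds.
move=> t t0; apply: sup_norm_le => [|i]; first exact: sup_norm_ge0.
rewrite ler_norml; apply: w_bounds t0 i => j; rewrite -ler_norml.
exact: ler_sup_norm.
Qed.
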